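(* Let $n\ge 2$ and let $x=(x_1,\dots,x_n)$, $y=(y_1,\dots,y_n)$, $w=(w_1,\dots,w_n)$ be three bases of the free group $F_n$. Suppose there exists $v\in F_n$ such that $x_i=vw_iv^{-1}$ for all $i\in\{1,\dots,n\}$. Then $|v|_y\le |w|_y^2\,|y|_x$.
   Context: For a basis $x$ of $F_n$ and $u\in F_n$, $|u|_x$ denotes the length of the reduced word representing $u$ in the basis $x$. For two bases $x,y$ of $F_n$, $|y|_x=\max_i |y_i|_x$ is the maximal length of an element of $y$ written in the basis $x$. *)

(* The free group F_n is modelled by words over the alphabet
   {x_0,...,x_{n-1}}^{+-1}; two words represent the same element of F_n iff
   their free reductions (fnorm) coincide. *)
From Stdlib Require Import ClassicalEpsilon.
From mathcomp Require Import all_boot.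
Set Implicit Arguments. Unset Strict Implicit. Unset Printing Implicit Defensive.

(* a letter (i, b): generator i, inverted iff b = true *)
Definition letter (n : nat) : Type := ('I_n * bool)%type.
Definition word (n : nat) : Type := seq (letter n).

Definition inv_letter n (a : letter n) : letter n := (a.1, ~~ a.2).

Definition winv n (s : word n) : word n := rev (map (@inv_letter n) s).

Definition cons_red n (a : letter n) (s : word n) : word n :=
  match s with
  | b :: t => if b == inv_letter a then t else a :: s
  | [::] => [:: a]
  end.

Definition fnorm n (s : word n) : word n := foldr (@cons_red n) [::] s.

Definition weval n (x : 'I_n -> word n) (s : word n) : word n :=
  flatten (map (fun a : letter n => if a.2 then winv (x a.1) else x a.1) s).

(* x = (x_1,...,x_n) is a basis of F_n: the endomorphism of F_n sending the
   i-th standard generator to x_i is bijective *)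
Definition is_basis n (x : 'I_n -> word n) : Prop :=
  (forall u : word n, exists s : word n, fnorm (weval x s) = fnorm u) /\
  (forall s t : word n, fnorm (weval x s) = fnorm (weval x t) -> fnorm s = fnorm t).

Definition writable_len n (x : 'I_n -> word n) (u : word n) (k : nat) : bool :=
  [exists t : k.-tuple (letter n), fnorm (weval x t) == fnorm u].

(* |u|_x : the least length of a word in x representing u, i.e. the length of
   the reduced word representing u in the basis x (0 if x is not generating) *)
Definition wlen n (x : 'I_n -> word n) (u : word n) : nat :=
  match excluded_middle_informative (exists k, writable_len x u k) with
  | left H => ex_minn H
  | right _ => 0
  end.

Definition blen n (x y : 'I_n -> word n) : nat := \max_(i < n) wlen x (y i).

(* Proof idea (|.|_y is length in the basis y, A := |w|_y, B := |y|_x).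
   Let V be the reduced y-word of v.  Since n >= 2 there is a generator y_j
   whose index differs from that of the first letter of V; then the word
   V^-1 y_j V is reduced, so |v^-1 y_j v|_y = 2|v|_y + 1.  On the other hand
   write y_j = T(x) with |T| = |y_j|_x <= B.  As x_i = v w_i v^-1, the
   substitution gives y_j = v T(w) v^-1, i.e. v^-1 y_j v = T(w), and
   substituting into the y-words of the w_i gives |T(w)|_y <= |T| A <= AB.
   Hence 2|v|_y < AB, so |v|_y <= AB <= A^2 B (the argument gives the
   sharper bound AB and does not use that w is a basis). *)
From mathcomp Require Import all_boot.
From Stdlib Require Import Setoid Morphisms ClassicalEpsilon.
Set Implicit Arguments. Unset Strict Implicit.

Section FreeReduction.
Variable n : nat.
Implicit Types (a b : letter n) (s t r : word n).

Definition no_cancel : rel (letter n) := fun a b => b != inv_letter a.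
Definition reduced (s : word n) := sorted no_cancel s.

Lemma inv_letterK a : inv_letter (inv_letter a) = a.
Proof. by case: a => i b; rewrite /inv_letter /= negbK. Qed.

Definition act s r := foldr (@cons_red n) r s.

Lemma fnorm_cat s t : fnorm (s ++ t) = act s (fnorm t).
Proof. by rewrite /fnorm /act foldr_cat. Qed.

Lemma cons_red_reduced a r : reduced r -> reduced (cons_red a r).
Proof.
rewrite /reduced; case: r => [|b r] //= H.
case: eqP => [_|ne]; first exact: path_sorted H.
by rewrite /= H andbT /no_cancel; apply/eqP.
Qed.

Lemma act_reduced s r : reduced r -> reduced (act s r).
Proof. by elim: s => //= a s IH H; apply/cons_red_reduced/IH. Qed.

Lemma fnorm_reduced s : reduced (fnorm s).
Proof. exact: act_reduced. Qed.

Lemma reduced_fnorm r : reduced r -> fnorm r = r.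
Proof.
elim: r => //= a r IH H.
rewrite IH; last exact: path_sorted H.
case: r H {IH} => [|b r] //= /andP [H1 _].
by rewrite /no_cancel in H1; rewrite (negbTE H1).
Qed.

Lemma cons_redK a r : reduced r -> cons_red a (cons_red (inv_letter a) r) = r.
Proof.
case: r => [|c r] /= H; first by rewrite eqxx.
rewrite inv_letterK; case: eqP => [E|ne]; last by rewrite /= eqxx.
subst c; case: r H => [|d r] //= /andP [H1 _].
by rewrite /no_cancel in H1; rewrite (negbTE H1).
Qed.

Lemma act_cons_red a r R : reduced r -> reduced R ->
  act (cons_red a r) R = cons_red a (act r R).
Proof.
case: r => [|b r] //= Hr HR.
case: eqP => [->|//].
by rewrite cons_redK //; apply: act_reduced.
Qed.

Lemma act_fnorm s R : reduced R -> act s R = act (fnorm s) R.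
Proof.
move=> HR; elim: s => //= a s IH.
by rewrite IH act_cons_red // fnorm_reduced.
Qed.

Lemma fnorm_catE s t : fnorm (s ++ t) = fnorm (fnorm s ++ fnorm t).
Proof.
rewrite !fnorm_cat (reduced_fnorm (fnorm_reduced t)).
exact/act_fnorm/fnorm_reduced.
Qed.

Lemma size_fnorm s : size (fnorm s) <= size s.
Proof.
elim: s => //= a s IH.
case: (fnorm s) IH => [|b r] //= IH.
by case: eqP => _ /=; [apply: leq_trans (leqnSn _) _ | ]; apply: leq_trans IH _.
Qed.

Definition eqw s t := fnorm s = fnorm t.

Global Instance eqw_equiv : Equivalence eqw.
Proof. split; rewrite /eqw; congruence. Qed.

Global Instance cat_proper : Proper (eqw ==> eqw ==> eqw) (@cat (letter n)).
Proof. by move=> s s' Hs t t' Ht; rewrite /eqw fnorm_catE Hs Ht -fnorm_catE. Qed.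

Lemma winv_cat s t : winv (s ++ t) = winv t ++ winv s.
Proof. by rewrite /winv map_cat rev_cat. Qed.

Lemma winvK s : winv (winv s) = s.
Proof.
by rewrite /winv map_rev revK -map_comp map_id_in // => a _; apply: inv_letterK.
Qed.

Lemma size_winv s : size (winv s) = size s.
Proof. by rewrite /winv size_rev size_map. Qed.

Lemma winv_cons a s : winv (a :: s) = winv s ++ [:: inv_letter a].
Proof. by rewrite /winv /= rev_cons cats1. Qed.

Lemma catV s : eqw (s ++ winv s) [::].
Proof.
rewrite /eqw; elim: s => //= a s IH.
by rewrite winv_cons catA fnorm_catE IH /= eqxx.
Qed.

Lemma catVl s : eqw (winv s ++ s) [::].
Proof. by rewrite -{2}(winvK s) catV. Qed.

Global Instance winv_proper : Proper (eqw ==> eqw) (@winv n).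
Proof.
move=> s t H.
transitivity (winv s ++ (t ++ winv t)); first by rewrite catV cats0.
rewrite catA.
transitivity (([::] : word n) ++ winv t); last by [].
apply: cat_proper; last by [].
by rewrite /eqw fnorm_catE -H -fnorm_catE; apply: catVl.
Qed.

Lemma conjK c W : eqw (winv c ++ (c ++ W ++ winv c) ++ c) W.
Proof. by rewrite !catA catVl /= -catA catVl cats0. Qed.

Lemma reduced_winv s : reduced s -> reduced (winv s).
Proof.
rewrite /reduced /winv rev_sorted sorted_map => H.
rewrite (eq_sorted (e' := no_cancel)) // => p q.
by rewrite /relpre /= /no_cancel inv_letterK eq_sym.
Qed.

Lemma reduced_conj a V : reduced V ->
  (if V is b :: _ then a.1 != b.1 else true) -> reduced (winv V ++ a :: V).
Proof.
case: V => [|b V] // H ne; rewrite /reduced sorted_cat_cons.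
have -> : rcons (winv (b :: V)) a = winv (inv_letter a :: b :: V).
  by rewrite [RHS]winv_cons inv_letterK cats1.
have Hab : b != a by apply: contraNneq ne => ->.
have Hab' : b != inv_letter a by apply: contraNneq ne => ->.
move: H; rewrite /reduced /= => H.
rewrite /no_cancel Hab' H !andbT.
have := @reduced_winv (inv_letter a :: b :: V).
by rewrite /reduced /= /no_cancel inv_letterK Hab H; apply.
Qed.

End FreeReduction.

Section Substitution.
Variable n : nat.
Implicit Types (x f g U : 'I_n -> word n) (a : letter n) (s t c : word n).

Definition img x a := if a.2 then winv (x a.1) else x a.1.

Lemma weval_cons x a s : weval x (a :: s) = img x a ++ weval x s.
Proof. by []. Qed.

Lemma weval_cat x s t : weval x (s ++ t) = weval x s ++ weval x t.
Proof. by rewrite /weval map_cat flatten_cat. Qed.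

Lemma img_inv x a : img x (inv_letter a) = winv (img x a).
Proof. by case: a => i [] /=; rewrite /img /= ?winvK. Qed.

Lemma weval_winv x s : weval x (winv s) = winv (weval x s).
Proof.
elim: s => //= a s IH.
rewrite winv_cons weval_cat IH weval_cons winv_cat.
by rewrite /weval /= cats0 -/(img x (inv_letter a)) img_inv.
Qed.

Lemma weval_fnorm x s : eqw (weval x s) (weval x (fnorm s)).
Proof.
elim: s => // a s IH.
rewrite weval_cons /= IH.
case: (fnorm s) => [|b r] //=.
case: eqP => [->|_] //.
by rewrite weval_cons img_inv catA catV.
Qed.

Lemma weval_ext x x' s : (forall i, eqw (x i) (x' i)) -> eqw (weval x s) (weval x' s).
Proof.
move=> H; elim: s => // a s IH.
by rewrite !weval_cons IH /img; case: a.2; rewrite H.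
Qed.

Lemma weval_comp x U s : weval x (weval U s) = weval (fun i => weval x (U i)) s.
Proof.
elim: s => // a s IH.
by rewrite !weval_cons weval_cat IH /img; case: a.2; rewrite ?weval_winv.
Qed.

Lemma size_weval U k s : (forall i, size (U i) <= k) -> size (weval U s) <= size s * k.
Proof.
move=> H; elim: s => // a s IH.
by rewrite weval_cons size_cat mulSn leq_add // /img; case: a.2; rewrite ?size_winv H.
Qed.

Lemma weval_conj f g c s : (forall i, eqw (f i) (c ++ g i ++ winv c)) ->
  eqw (weval f s) (c ++ weval g s ++ winv c).
Proof.
move=> H; elim: s => [|a s IH] /=; first by rewrite catV.
rewrite !weval_cons IH.
have -> : eqw (img f a) (c ++ img g a ++ winv c).
  by rewrite /img; case: a.2; rewrite H // !winv_cat winvK catA.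
by rewrite -!catA (catA (winv c)) catVl.
Qed.

End Substitution.

Section BasisLength.
Variable n : nat.
Implicit Types (x y w : 'I_n -> word n) (s t u v : word n).

Lemma wlen_eq y t u : is_basis y -> eqw (weval y t) u -> wlen y u = size (fnorm t).
Proof.
move=> [_ hy2] Ht.
have W : writable_len y u (size (fnorm t)).
  apply/existsP; exists (in_tuple (fnorm t)); apply/eqP => /=.
  by rewrite -Ht; symmetry; apply: weval_fnorm.
rewrite /wlen; case: excluded_middle_informative => [H|[]]; last by exists (size (fnorm t)).
case: ex_minnP => k /existsP [tt /eqP Htt] hmin.
apply/eqP; rewrite eqn_leq hmin //=.
have E : fnorm tt = fnorm t by apply: hy2; rewrite Htt Ht.
by rewrite -E -{2}(size_tuple tt) size_fnorm.
Qed.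

Lemma basis_repr y u : is_basis y ->
  exists t, [/\ reduced t, eqw (weval y t) u & wlen y u = size t].
Proof.
move=> hy; have [s Hs] := hy.1 u.
exists (fnorm s); split; first exact: fnorm_reduced.
  by rewrite -weval_fnorm.
exact: wlen_eq hy Hs.
Qed.

Lemma wlen_eqw y u u' : is_basis y -> eqw u u' -> wlen y u = wlen y u'.
Proof.
move=> hy Hu; have [t [redt Ht ->]] := basis_repr u hy.
by rewrite (wlen_eq hy (etrans Ht Hu)) (reduced_fnorm redt).
Qed.

Lemma wlen_weval_le y w s : is_basis y -> wlen y (weval w s) <= size s * blen y w.
Proof.
move=> hy.
have [U HU] := fin_all_exists (fun i => basis_repr (w i) hy).
have HUw : eqw (weval y (weval U s)) (weval w s).
  by rewrite weval_comp; apply: weval_ext => i; have [] := HU i.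
rewrite (wlen_eq hy HUw); apply: leq_trans (size_fnorm _) _.
apply: size_weval => i; have [_ _ <-] := HU i.
exact: (@leq_bigmax _ (fun i => wlen y (w i)) i).
Qed.

Lemma wlen_conj_gen y u : 2 <= n -> is_basis y ->
  exists j, (wlen y u).*2 < wlen y (winv u ++ y j ++ u).
Proof.
move=> hn hy; have [V [redV HV ->]] := basis_repr u hy.
have [j Hj] : exists j : 'I_n, is_true (if V is b :: _ then j != b.1 else true).
  have h0 : 0 < n by apply: leq_trans hn.
  case: V {redV HV} => [|b V]; first by exists (Ordinal h0).
  case: (eqVneq b.1 (Ordinal h0)) => [E|ne]; last by exists (Ordinal h0); rewrite eq_sym.
  by exists (Ordinal hn); rewrite E.
exists j.
have Hconj : eqw (weval y (winv V ++ (j, false) :: V)) (winv u ++ y j ++ u).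
  by rewrite weval_cat weval_winv weval_cons HV.
rewrite (wlen_eq hy Hconj) (reduced_fnorm (@reduced_conj _ (j, false) _ redV Hj)).
by rewrite size_cat /= size_winv addnS -addnn.
Qed.

End BasisLength.

Theorem lemma2p3 (n : nat) (hn : 2 <= n) (x y w : 'I_n -> word n) (v : word n)
  (hx : is_basis x) (hy : is_basis y) (hw : is_basis w)
  (hv : forall i : 'I_n, fnorm (x i) = fnorm (v ++ w i ++ winv v)) :
  wlen y v <= (blen y w) ^ 2 * blen x y.
Proof.
have [j long_conj] := wlen_conj_gen v hn hy.
have [T [_ HT lenT]] := basis_repr (y j) hx.
have lenT_le : size T <= blen x y.
  by rewrite -lenT; exact: (@leq_bigmax _ (fun i => wlen x (y i)) j).
have conj_yj : eqw (winv v ++ y j ++ v) (weval w T).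
  by rewrite -HT (weval_conj (g := w) (c := v) T hv) conjK.
have short_conj : wlen y (winv v ++ y j ++ v) <= blen x y * blen y w.
  rewrite (wlen_eqw hy conj_yj); apply: leq_trans (wlen_weval_le w T hy) _.
  by rewrite leq_mul2r lenT_le orbT.
have le_AB : wlen y v <= blen y w * blen x y.
  rewrite mulnC; apply: leq_trans short_conj; apply: leq_trans (ltnW long_conj).
  by rewrite -addnn leq_addr.
apply: leq_trans le_AB _; case: (blen y w) => [|a] //.
by rewrite expnS -mulnA leq_pmull.
Qed.
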